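(* Let $k\ge2$ be even, $\alpha_1,\dots,\alpha_k$ positive integers, $G=C(\alpha_1,\dots,\alpha_k)$, and let $m(G)$ be the number of distinct Laplacian eigenvalues of $G$. Then $k\le m(G)\le 2k-1$.
   Context: $C(\alpha_1,\dots,\alpha_k)$ is defined recursively by $C(\alpha_1)=\overline{K_{\alpha_1}}$ (edgeless graph) and $C(\alpha_1,\dots,\alpha_i)=\overline{C(\alpha_1,\dots,\alpha_{i-1})\cup K_{\alpha_i}}$ for $i=2,\dots,k$ (disjoint union, then complement). Equivalently for $k$ even, with $\pi_i$ the $\alpha_i$ vertices introduced at step $i$: $\pi_i$ is a clique for $i$ odd, independent for $i$ even, and for $i<j$ vertices of $\pi_i,\pi_j$ are adjacent iff $j$ is even. Laplacian eigenvalues are those of $L=D-A$. *)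

From HB Require Import structures.
From mathcomp Require Import all_boot all_order all_algebra all_field.
Set Implicit Arguments. Unset Strict Implicit. Unset Printing Implicit Defensive.
Import Order.TTheory GRing.Theory Num.Theory.
Local Open Scope ring_scope.

(* Vertex set of C(alpha_1,...,alpha_k): the vertex (i, j) is the j-th vertex
   of the block pi_{i+1} (blocks are 0-indexed here: i : 'I_k stands for
   pi_{i+1}). *)
Definition Cvert (k : nat) (alpha : 'I_k -> nat) : finType :=
  {i : 'I_k & 'I_(alpha i)}.

(* Adjacency of C(alpha_1,...,alpha_k) for k even (explicit description):
   pi_i is a clique for i odd, independent for i even; for i < j, vertices of
   pi_i, pi_j are adjacent iff j is even.  With 0-based block index b = i-1:
   block b is a clique iff b is even; across blocks b < b', adjacent iff b' is odd. *)
Definition Cadj (k : nat) (alpha : 'I_k -> nat) : rel (Cvert alpha) :=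
  fun u v =>
    (u != v) &&
    (if tag u == tag v then ~~ odd (tag u)
     else odd (maxn (tag u) (tag v))).

Definition laplacian (V : finType) (e : rel V) : 'M[algC]_#|V| :=
  \matrix_(i, j)
    (if i == j then (#|[set z | e (enum_val i) z]|)%:R
     else - ((e (enum_val i) (enum_val j)) : nat)%:R).

Definition num_distinct_eigenvalues (n : nat) (A : 'M[algC]_n) (m : nat) : Prop :=
  exists s : seq algC,
    [/\ uniq s, forall a, eigenvalue A a = (a \in s) & size s = m].

From HB Require Import structures.
From mathcomp Require Import all_boot all_order all_algebra all_field.
From mathcomp Require Import zify ring.
Set Implicit Arguments. Unset Strict Implicit. Unset Printing Implicit Defensive.
Import Order.TTheory GRing.Theory Num.Theory.
Local Open Scope ring_scope.

(* Number the blocks from 0, let a_b be the size of block b and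
   n_r = a_0 + ... + a_(r-1).  For r even, block r is a clique with no edge to
   earlier blocks and block r+1 is a coclique joined to every earlier block, so
   the graph on the first r+2 blocks is the join of (graph on the first r
   blocks + K_(a_r)) with a coclique of size a_(r+1).  Following an eigenvector
   through its block sums shows that its Laplacian spectrum consists of 0,
   n_(r+2), n_(r+1) (if a_(r+1) > 1), a_r + a_(r+1) (if r > 0 and a_r > 1), and
   the spectrum of the graph on the first r blocks shifted by a_(r+1).  So each
   pair of blocks adds at most four eigenvalues, and the first pair at most
   three: m <= 2k - 1.  Conversely 0, n_(r+2) and the shifted values coming from
   earlier pairs are k distinct eigenvalues, since all shifted values lie
   strictly between 0 and n_(r+2). *)

Section Laplacian.
Variables (V : finType) (e : rel V).
Hypotheses (e_sym : symmetric e) (e_irr : irreflexive e).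

Lemma natr_card_rel u : (#|[set w | e u w]|%:R : algC) = \sum_w (e u w)%:R.
Proof.
rewrite cardsE -sum1_card natr_sum big_mkcond /=.
by apply: eq_bigr => w _; rewrite [in LHS]unfold_in; case: (e u w).
Qed.

Lemma mul_row_laplacian (v : 'rV[algC]_#|V|) (u : V) :
  (v *m laplacian e) 0 (enum_rank u) =
  \sum_w (e u w)%:R * (v 0 (enum_rank u) - v 0 (enum_rank w)).
Proof.
rewrite !mxE (reindex (@enum_rank V)); last first.
  by apply: onW_bij; exact: enum_rank_bij.
pose fv w := v 0 (enum_rank w).
transitivity (\sum_w fv w *
    (if w == u then #|[set z | e u z]|%:R else - (e w u)%:R)).
  apply: eq_bigr => w _; rewrite mxE !enum_rankK (inj_eq (can_inj enum_rankK)).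
  by case: eqP => [->|].
rewrite (bigD1 u) //= eqxx natr_card_rel -/(fv u).
under eq_bigr => w wu do rewrite (negbTE wu) e_sym.
rewrite [in RHS](bigD1 u) //= e_irr mul0r add0r.
rewrite (bigD1 u (P := predT) (F := fun w => (e u w)%:R)) //= e_irr add0r.
rewrite mulr_sumr -big_split /=; apply: eq_bigr => w _.
by rewrite mulrN mulrBr; congr (_ - _); exact: mulrC.
Qed.

Lemma eigenvalue_laplacianP mu :
  eigenvalue (laplacian e) mu <->
  exists2 f : V -> algC, (exists u, f u != 0) &
    forall u, \sum_w (e u w)%:R * (f u - f w) = mu * f u.
Proof.
pose at_u u (M : 'rV[algC]_#|V|) := M 0 (enum_rank u).
split.
  case/eigenvalueP => v vL v0; exists (fun w => v 0 (enum_rank w)).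
    apply/existsP; apply: contraNT v0 => /existsPn f0.
    by apply/eqP/rowP => i; rewrite mxE -[i]enum_valK; apply/eqP/negPn/f0.
  by move=> u; have := congr1 (at_u u) vL; rewrite /at_u mul_row_laplacian mxE.
case=> f [u fu0] fL; apply/eigenvalueP; exists (\row_i f (enum_val i)).
  apply/rowP => j; rewrite -[j]enum_valK mul_row_laplacian !mxE.
  by under eq_bigr do rewrite !mxE !enum_rankK; rewrite enum_rankK fL.
apply: contra_neq fu0 => /(congr1 (at_u u)).
by rewrite /at_u !mxE enum_rankK.
Qed.
End Laplacian.

Section Spectrum.
Variables (k : nat) (alpha : 'I_k -> nat).
Local Notation V := (Cvert alpha).
Local Notation adj := (@Cadj k alpha).

Definition bsize (b : nat) : nat := if insub b is Some j then alpha j else 0%N.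
Definition prefix_size (r : nat) : nat := (\sum_(b < r) bsize b)%N.
Definition blk (u : V) : nat := tag u.
Definition block_sum (f : V -> algC) (b : nat) : algC :=
  \sum_(w | blk w == b) f w.
Definition block_adj (a b : nat) : bool :=
  if a == b then ~~ odd a else odd (maxn a b).

Lemma bsizeE (j : 'I_k) : bsize j = alpha j.
Proof. by rewrite /bsize valK. Qed.

Lemma bsize_out b : (k <= b)%N -> bsize b = 0%N.
Proof. by move=> kb; rewrite /bsize insubF // ltnNge kb. Qed.

Lemma prefix_sizeS r : prefix_size r.+1 = (prefix_size r + bsize r)%N.
Proof. by rewrite /prefix_size big_ord_recr. Qed.

Lemma block_adj_lt a b : (a < b)%N -> block_adj a b = odd b.
Proof. by move=> ab; rewrite /block_adj ltn_eqF // (maxn_idPr (ltnW ab)). Qed.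

Lemma block_adj_gt a b : (b < a)%N -> block_adj a b = odd a.
Proof. by move=> ba; rewrite /block_adj gtn_eqF // (maxn_idPl (ltnW ba)). Qed.

Lemma block_adjxx a : block_adj a a = ~~ odd a.
Proof. by rewrite /block_adj eqxx. Qed.

Lemma CadjE u w : adj u w = (u != w) && block_adj (blk u) (blk w).
Proof. by []. Qed.

Lemma Cadj_irr : irreflexive adj.
Proof. by move=> u; rewrite CadjE eqxx. Qed.

Lemma Cadj_sym : symmetric adj.
Proof.
move=> u w; rewrite !CadjE /block_adj (eq_sym w) (eq_sym (blk w)) maxnC.
by case: (blk u =P blk w) => [->|].
Qed.

Lemma sum_block_const b (c : algC) :
  \sum_(w : V | blk w == b) c = (bsize b)%:R * c.
Proof.
case: (ltnP b k) => [bk|kb]; last first.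
  rewrite bsize_out // mul0r big_pred0 // => w; apply/negbTE/eqP => wb.
  by have := ltn_ord (tag w); rewrite -/(blk w) wb ltnNge kb.
pose j := Ordinal bk; pose T i := 'I_(alpha i).
transitivity (\sum_(w in tagged_with T j) untag 0 (fun _ : T j => c) w).
  apply: eq_big => [w|w /eqP wb]; first by rewrite inE -val_eqE.
  have wj : tag w = j by apply: val_inj.
  by rewrite (untagE _ _ wj).
rewrite -(big_tag (fun i (_ : T i) => c)) sumr_const card_ord.
by rewrite -[b]/(val j) bsizeE mulr_natl.
Qed.

Lemma card_block b : #|[pred w : V | blk w == b]| = bsize b.
Proof.
apply/eqP; rewrite -(eqr_nat algC) -[(bsize b)%:R]mulr1 -sum_block_const.
by rewrite -sum1_card natr_sum.
Qed.

Lemma sum_prefix_blocks (F : V -> algC) r :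
  \sum_(w | (blk w < r)%N) F w = \sum_(b < r) \sum_(w | blk w == b) F w.
Proof.
rewrite (exchange_big_dep (fun w => (blk w < r)%N)) /=; last first.
  by move=> b w _ /eqP ->.
apply: eq_bigr => w wr.
by rewrite (big_pred1 (Ordinal wr)) // => b; rewrite /= eq_sym -val_eqE.
Qed.

Definition lap_prefix (r : nat) (f : V -> algC) (u : V) : algC :=
  \sum_(b < r) (block_adj (blk u) b)%:R * ((bsize b)%:R * f u - block_sum f b).

Lemma lap_prefixE r f u :
  lap_prefix r f u = \sum_(w | (blk w < r)%N) (adj u w)%:R * (f u - f w).
Proof.
rewrite sum_prefix_blocks; apply: eq_bigr => b _.
rewrite -sum_block_const /block_sum -sumrB mulr_sumr.
apply: eq_bigr => w /eqP wb; rewrite CadjE -wb.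
by case: (u =P w) => [->|_]; rewrite ?subrr ?mulr0.
Qed.

Lemma sum_lap_prefix r f : \sum_(u | (blk u < r)%N) lap_prefix r f u = 0.
Proof.
set S := (X in X = 0).
have SE : S = \sum_(u | (blk u < r)%N) \sum_(w | (blk w < r)%N)
                 (adj u w)%:R * (f u - f w).
  by apply: eq_bigr => u _; rewrite lap_prefixE.
have SN : S = - S.
  rewrite {1}SE exchange_big SE -sumrN; apply: eq_bigr => u _.
  rewrite -sumrN; apply: eq_bigr => w _.
  by rewrite Cadj_sym -mulrN opprB.
apply/eqP; move/eqP: SN; rewrite -subr_eq0 opprK -mulr2n -mulr_natr.
by rewrite mulf_eq0 pnatr_eq0 orbF.
Qed.

Definition prefix_eigen (r : nat) (f : V -> algC) (mu : algC) : Prop :=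
  [/\ forall u, (r <= blk u)%N -> f u = 0,
      forall u, (blk u < r)%N -> lap_prefix r f u = mu * f u
    & exists u, f u != 0].

Lemma eigenvalue_CadjP mu :
  eigenvalue (laplacian adj) mu <-> exists f, prefix_eigen k f mu.
Proof.
have lapE f u : lap_prefix k f u = \sum_w (adj u w)%:R * (f u - f w).
  by rewrite lap_prefixE; apply: eq_bigl => w; rewrite /blk ltn_ord.
have blk_lt u : (blk u < k)%N by exact: ltn_ord.
rewrite (eigenvalue_laplacianP Cadj_sym Cadj_irr); split.
  case=> f f_nz fL; exists f; split=> // [u|u _]; first by rewrite leqNgt blk_lt.
  by rewrite lapE.
by case=> f [_ fL f_nz]; exists f => // u; rewrite -lapE fL.
Qed.

Lemma prefix_eigen_total r f mu :
  prefix_eigen r f mu -> mu * \sum_(b < r) block_sum f b = 0.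
Proof.
case=> _ fL _; rewrite /block_sum -sum_prefix_blocks mulr_sumr.
rewrite -[RHS](sum_lap_prefix r f).
by apply: eq_bigr => u ur; rewrite fL.
Qed.

Lemma block_sum_const f b c :
  (forall u, blk u = b -> f u = c) -> block_sum f b = (bsize b)%:R * c.
Proof. by move=> fc; rewrite -sum_block_const; apply: eq_bigr => w /eqP /fc. Qed.

Lemma block_sum0 f b : (forall u, blk u = b -> f u = 0) -> block_sum f b = 0.
Proof. by move/block_sum_const->; rewrite mulr0. Qed.

Lemma sum_block_sum_const f r c : (forall u, (blk u < r)%N -> f u = c) ->
  \sum_(b < r) block_sum f b = (prefix_size r)%:R * c.
Proof.
move=> fc; rewrite /prefix_size natr_sum mulr_suml; apply: eq_bigr => b _.
by apply: block_sum_const => u ub; rewrite fc ?ub.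
Qed.

Lemma lap_prefix_const f r c : (forall u, (blk u < r)%N -> f u = c) ->
  forall u, (blk u < r)%N -> lap_prefix r f u = 0.
Proof.
move=> fc u ur; apply: big1 => b _.
by rewrite (@block_sum_const f b c) => [|w wb]; rewrite ?fc ?wb ?subrr ?mulr0.
Qed.

Lemma lap_prefix_top r f u : ~~ odd r -> blk u = r.+1 ->
  lap_prefix r.+2 f u =
  (prefix_size r.+1)%:R * f u - \sum_(b < r.+1) block_sum f b.
Proof.
move=> r_even ur; rewrite /lap_prefix big_ord_recr /= ur block_adjxx /= r_even.
rewrite mul0r addr0 /prefix_size natr_sum mulr_suml -sumrB.
by apply: eq_bigr => b _; rewrite block_adj_gt //= ?r_even ?mul1r // ltnS ltnW.
Qed.

Lemma lap_prefix_mid r f u : ~~ odd r -> blk u = r ->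
  lap_prefix r.+2 f u =
  ((bsize r)%:R + (bsize r.+1)%:R) * f u - block_sum f r - block_sum f r.+1.
Proof.
move=> r_even ur; rewrite /lap_prefix !big_ord_recr /= ur block_adjxx.
rewrite block_adj_lt //= r_even /= !mul1r big1 ?add0r => [|b _]; first ring.
by rewrite block_adj_gt //= (negbTE r_even) mul0r.
Qed.

Lemma lap_prefix_low r f u : ~~ odd r -> (blk u < r)%N ->
  lap_prefix r.+2 f u =
  lap_prefix r f u + (bsize r.+1)%:R * f u - block_sum f r.+1.
Proof.
move=> r_even ur; rewrite /lap_prefix !big_ord_recr /= block_adj_lt //.
rewrite block_adj_lt ?(ltn_trans ur) //= (negbTE r_even) mul0r addr0 mul1r.
by rewrite addrA.
Qed.

Lemma lap_prefixSS_eigen r f mu : ~~ odd r ->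
  (forall u, (blk u < r)%N ->
     lap_prefix r f u + (bsize r.+1)%:R * f u - block_sum f r.+1 = mu * f u) ->
  (forall u, blk u = r ->
     ((bsize r)%:R + (bsize r.+1)%:R) * f u - block_sum f r - block_sum f r.+1
     = mu * f u) ->
  (forall u, blk u = r.+1 ->
     (prefix_size r.+1)%:R * f u - \sum_(b < r.+1) block_sum f b = mu * f u) ->
  forall u, (blk u < r.+2)%N -> lap_prefix r.+2 f u = mu * f u.
Proof.
move=> r_even low mid top u; rewrite ltnS leq_eqVlt ltnS.
case/orP=> [/eqP|]; first by move=> ur; rewrite lap_prefix_top // top.
rewrite leq_eqVlt => /orP[/eqP ur|ur]; first by rewrite lap_prefix_mid // mid.
by rewrite lap_prefix_low // low.
Qed.

(* The spectrum of the graph on the first 2t blocks, with repetitions. *)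
Fixpoint prefix_spec (t : nat) : seq nat :=
  if t is t'.+1 then
    [:: 0%N, prefix_size t'.*2.+2
      & (if (1 < bsize t'.*2.+1)%N then [:: prefix_size t'.*2.+1] else [::])
        ++ (if (0 < t')%N && (1 < bsize t'.*2)%N
            then [:: bsize t'.*2 + bsize t'.*2.+1]%N else [::])
        ++ map (addn (bsize t'.*2.+1)) (prefix_spec t')]
  else [::].

Definition prefix_specC (t : nat) : seq algC := [seq x%:R | x <- prefix_spec t].

Lemma mem_prefix_specCS t (mu : algC) :
  mu \in prefix_specC t.+1 =
  [|| mu == 0, mu == (prefix_size t.*2.+2)%:R,
      (1 < bsize t.*2.+1)%N && (mu == (prefix_size t.*2.+1)%:R),
      [&& (0 < t)%N, (1 < bsize t.*2)%N & mu == (bsize t.*2 + bsize t.*2.+1)%:R]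
    | mu - (bsize t.*2.+1)%:R \in prefix_specC t].
Proof.
rewrite /prefix_specC /= !inE !map_cat !mem_cat.
congr (_ || (_ || (_ || (_ || _)))).
- by case: ifP => _; rewrite /= ?inE ?orbF.
- by case: ifP => /= h; rewrite ?inE ?orbF andbA h.
rewrite -map_comp; apply/mapP/mapP => [[x xs ->]|[x xs e]]; exists x => //=.
  by rewrite natrD addrAC subrr add0r.
by rewrite natrD -e addrC subrK.
Qed.

Lemma mem0_prefix_specC t : (0 < t)%N -> 0 \in prefix_specC t.
Proof. by case: t => // t _; rewrite mem_prefix_specCS eqxx. Qed.

Hypothesis alpha_gt0 : forall i, (0 < alpha i)%N.

Lemma bsize_gt0 b : (b < k)%N -> (0 < bsize b)%N.
Proof. by move=> bk; rewrite -[b]/(val (Ordinal bk)) bsizeE. Qed.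

Lemma block_supportP (f : V -> algC) b :
  (forall u, blk u = b -> f u = 0) \/ exists2 u, blk u = b & f u != 0.
Proof.
case: (boolP [exists u, (blk u == b) && (f u != 0)]) => [|/existsPn f0].
  by case/existsP => u /andP[/eqP ub fu]; right; exists u.
by left=> u ub; apply/eqP; move: (f0 u); rewrite ub eqxx negbK.
Qed.

Lemma bsize_gt1 f u :
  block_sum f (blk u) = 0 -> f u != 0 -> (1 < bsize (blk u))%N.
Proof.
move=> f0 fu; rewrite ltnNge; apply: contra fu => le1.
rewrite -f0 /block_sum (bigD1 u) //= big_pred0 ?addr0 // => w.
apply/negbTE/andP => -[/eqP wb wu]; move: le1.
by rewrite -card_block (cardD1 u) (cardD1 w) !inE wb eqxx wu.
Qed.

Lemma prefix_eigen_top r f mu : ~~ odd r -> prefix_eigen r.+2 f mu ->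
  mu != 0 -> mu != (prefix_size r.+2)%:R ->
  block_sum f r.+1 = 0 /\
  forall u, blk u = r.+1 -> mu * f u = (prefix_size r.+1)%:R * f u.
Proof.
move=> r_even fe mu0 muN; have [_ fL _] := fe.
set U := \sum_(b < r.+1) block_sum f b; set S := block_sum f r.+1.
have UE : U = - S.
  apply/eqP; rewrite -addr_eq0; move/eqP: (prefix_eigen_total fe).
  by rewrite big_ord_recr mulf_eq0 (negbTE mu0).
have topS : mu * S = (prefix_size r.+1)%:R * S - (bsize r.+1)%:R * U.
  rewrite /S /block_sum mulr_sumr -sum_block_const mulr_sumr -sumrB.
  by apply: eq_bigr => w /eqP wr; rewrite -fL ?wr // lap_prefix_top.
have S0 : S = 0.
  have : (mu - (prefix_size r.+2)%:R) * S = 0.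
    by rewrite mulrBl topS UE [prefix_size r.+2]prefix_sizeS natrD; ring.
  by move/eqP; rewrite mulf_eq0 subr_eq0 (negbTE muN) => /eqP.
split=> // u ur; rewrite -fL ?ur // lap_prefix_top // -/U.
by rewrite UE S0 oppr0 subr0.
Qed.

Lemma prefix_eigen_mid r f mu : ~~ odd r -> prefix_eigen r.+2 f mu ->
  block_sum f r.+1 = 0 ->
  (mu - (bsize r.+1)%:R) * block_sum f r = 0 /\
  forall u, blk u = r ->
    mu * f u = ((bsize r)%:R + (bsize r.+1)%:R) * f u - block_sum f r.
Proof.
move=> r_even [_ fL _] S0.
have midE u : blk u = r ->
    mu * f u = ((bsize r)%:R + (bsize r.+1)%:R) * f u - block_sum f r.
  by move=> ur; rewrite -fL ?ur // lap_prefix_mid // S0 subr0.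
split=> //; set R := block_sum f r.
have muR : mu * R = ((bsize r)%:R + (bsize r.+1)%:R) * R - (bsize r)%:R * R.
  rewrite {1 2}/R /block_sum mulr_sumr -sum_block_const mulr_sumr -sumrB.
  by apply: eq_bigr => w /eqP wr; rewrite midE.
by rewrite mulrBl muR; ring.
Qed.

Lemma prefix_eigen_restrict r f mu : ~~ odd r -> prefix_eigen r.+2 f mu ->
  (forall u, blk u = r -> f u = 0) -> (forall u, blk u = r.+1 -> f u = 0) ->
  prefix_eigen r f (mu - (bsize r.+1)%:R).
Proof.
move=> r_even [fS fL [u fu]] f_r f_r1; split=> [w||]; last by exists u.
- rewrite leq_eqVlt => /orP[/eqP/esym/f_r //|].
  by rewrite leq_eqVlt => /orP[/eqP/esym/f_r1 //|/fS].
- move=> w wr; have := fL w (ltn_trans wr (ltnW (ltnSn r.+1))).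
  rewrite lap_prefix_low // (block_sum0 f_r1) subr0 mulrBl => <-.
  by rewrite addrK.
Qed.

Lemma prefix_eigen_two f : (2 <= k)%N -> prefix_eigen 2 f (bsize 1)%:R ->
  exists2 u, blk u = 1%N & f u != 0.
Proof.
move=> k2 fe; have [fS _ [u0 fu0]] := fe.
case: (block_supportP f 1) => [f_1|//]; case/negP: fu0; apply/eqP.
have S0 := block_sum0 f_1; have [_ midE] := prefix_eigen_mid (r := 0) isT fe S0.
have a_gt0 r : (r < 2)%N -> ((bsize r)%:R != 0 :> algC).
  by move=> r2; rewrite pnatr_eq0 -lt0n bsize_gt0 // (leq_trans r2).
have R0 : block_sum f 0 = 0.
  move/eqP: (prefix_eigen_total fe); rewrite !big_ord_recr big_ord0 /= add0r.
  by rewrite S0 addr0 mulf_eq0 (negbTE (a_gt0 1%N isT)) => /eqP.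
have f_0 u : blk u = 0%N -> f u = 0.
  move=> u_0; have := midE u u_0; rewrite R0 subr0 mulrDl -[LHS]add0r.
  by move/addIr/esym/eqP; rewrite mulf_eq0 (negbTE (a_gt0 0%N isT)) => /eqP.
case: (ltnP (blk u0) 2) => [|/fS //]; rewrite ltnS leq_eqVlt ltnS leqn0.
by case/orP=> /eqP; [apply: f_1 | apply: f_0].
Qed.

Lemma prefix_eigenSS_spec t f mu : (t.*2.+2 <= k)%N ->
  prefix_eigen t.*2.+2 f mu ->
  mu \in prefix_specC t.+1 \/ prefix_eigen t.*2 f (mu - (bsize t.*2.+1)%:R).
Proof.
move=> tk fe; rewrite mem_prefix_specCS; set r := t.*2 in tk fe *.
have r_even : ~~ odd r by rewrite odd_double.
have [->|mu0] := eqVneq mu 0; first by left.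
have [->|muN] := eqVneq mu (prefix_size r.+2)%:R; first by rewrite orbT; left.
have [S0 topE] := prefix_eigen_top r_even fe mu0 muN.
case: (block_supportP f r.+1) => [f_r1|[u ur fu]]; last first.
  have muE : mu = (prefix_size r.+1)%:R by apply: (mulIf fu); rewrite topE.
  by left; rewrite -ur (bsize_gt1 (f := f)) ?ur // muE eqxx !orbT.
have [muR midE] := prefix_eigen_mid r_even fe S0.
have [mu_a|mu_a] := eqVneq mu (bsize r.+1)%:R.
  have [t0|t_gt0] := posnP t.
    have r0 : r = 0%N by rewrite /r t0.
    rewrite mu_a r0 in fe; rewrite r0 in tk f_r1.
    have [u u1 fu] := prefix_eigen_two tk fe.
    by rewrite f_r1 ?eqxx in fu.
  by left; rewrite mu_a subrr mem0_prefix_specC ?orbT.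
have R0 : block_sum f r = 0.
  by move/eqP: muR; rewrite mulf_eq0 subr_eq0 (negbTE mu_a) => /eqP.
case: (block_supportP f r) => [f_r|[u ur fu]]; last first.
  have muE : mu = (bsize r + bsize r.+1)%:R.
    by apply: (mulIf fu); rewrite midE // R0 subr0 natrD.
  have [t0|_] := posnP t.
    by move: muN; rewrite muE /r t0 !prefix_sizeS /prefix_size big_ord0 eqxx.
  by left; rewrite -ur (bsize_gt1 (f := f)) ?ur // muE eqxx !orbT.
by right; apply: prefix_eigen_restrict.
Qed.

Lemma prefix_eigen_spec t f mu :
  (t.*2 <= k)%N -> prefix_eigen t.*2 f mu -> mu \in prefix_specC t.
Proof.
elim: t f mu => [|t IH] f mu tk fe.
  by case: fe => fS _ [u]; rewrite fS ?eqxx.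
rewrite doubleS in tk fe; have [//|] := prefix_eigenSS_spec tk fe.
move/(IH _ _ (ltnW (ltnW tk))); rewrite mem_prefix_specCS => ->.
by rewrite !orbT.
Qed.

Lemma block_inhabited b : (b < k)%N -> exists u : V, blk u = b.
Proof.
move=> bk; have a_gt0 := alpha_gt0 (Ordinal bk).
by exists (Tagged (fun i => 'I_(alpha i)) (Ordinal a_gt0)).
Qed.

Lemma prefix_eigen_const r :
  (0 < r <= k)%N -> prefix_eigen r (fun u => (blk u < r)%:R) 0.
Proof.
case/andP=> r_gt0 rk; have [u u0] := block_inhabited (leq_trans r_gt0 rk).
split=> [w|w wr|]; first by rewrite ltnNge => ->.
  by rewrite mul0r (lap_prefix_const (c := 1)) // => v ->.
by exists u; rewrite u0 r_gt0 oner_neq0.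
Qed.

Definition step_vec (s : nat) (c d : algC) (u : V) : algC :=
  if (blk u < s)%N then c else if blk u == s then d else 0.

Lemma step_vec_out s c d u : (s < blk u)%N -> step_vec s c d u = 0.
Proof. by move=> su; rewrite /step_vec ltnNge ltnW // gtn_eqF. Qed.

Lemma sum_block_step_vec s c d :
  \sum_(b < s) block_sum (step_vec s c d) b = (prefix_size s)%:R * c.
Proof. by apply: sum_block_sum_const => u us; rewrite /step_vec us. Qed.

Lemma block_sum_step_vec_lt s c d b :
  (b < s)%N -> block_sum (step_vec s c d) b = (bsize b)%:R * c.
Proof. by move=> bs; apply: block_sum_const => u ub; rewrite /step_vec ub bs. Qed.

Lemma block_sum_step_vec s c d : block_sum (step_vec s c d) s = (bsize s)%:R * d.
Proof.
by apply: block_sum_const => u us; rewrite /step_vec us ltnn eqxx.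
Qed.

Lemma step_vec_neq0 s c d :
  (s < k)%N -> d != 0 -> exists u, step_vec s c d u != 0.
Proof.
move=> sk d0; have [u us] := block_inhabited sk.
by exists u; rewrite /step_vec us ltnn eqxx.
Qed.

Lemma prefix_eigen_join r : ~~ odd r -> (r.+2 <= k)%N ->
  prefix_eigen r.+2
    (step_vec r.+1 (bsize r.+1)%:R (- (prefix_size r.+1)%:R))
    (prefix_size r.+2)%:R.
Proof.
move=> r_even rk; set f := step_vec _ _ _.
have fc u : (blk u <= r)%N -> f u = (bsize r.+1)%:R.
  by rewrite /f /step_vec ltnS => ->.
split=> [u ru||]; first exact: step_vec_out.
- apply: lap_prefixSS_eigen => // u ur.
  + rewrite (lap_prefix_const (c := (bsize r.+1)%:R)) => [|w wr|//]; last first.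
      exact/fc/ltnW.
    rewrite block_sum_step_vec (fc _ (ltnW ur)) !prefix_sizeS !natrD; ring.
  + rewrite block_sum_step_vec block_sum_step_vec_lt // fc ?ur //.
    by rewrite !prefix_sizeS !natrD; ring.
  + rewrite sum_block_step_vec /f /step_vec ur ltnn eqxx.
    by rewrite !prefix_sizeS !natrD; ring.
- apply: step_vec_neq0 => //; rewrite oppr_eq0 pnatr_eq0 -lt0n prefix_sizeS.
  by rewrite addn_gt0 bsize_gt0 ?orbT // ltnW.
Qed.

Lemma prefix_eigen_split r : ~~ odd r -> (0 < r)%N -> (r.+2 <= k)%N ->
  prefix_eigen r.+2 (step_vec r (bsize r)%:R (- (prefix_size r)%:R))
    (bsize r.+1)%:R.
Proof.
move=> r_even r_gt0 rk; set f := step_vec _ _ _.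
have fc u : (blk u < r)%N -> f u = (bsize r)%:R by rewrite /f /step_vec => ->.
have fS : block_sum f r.+1 = 0.
  by apply: block_sum0 => u ur; rewrite /f step_vec_out ?ur.
split=> [u ru||].
- by apply: step_vec_out; lia.
- apply: lap_prefixSS_eigen => // u ur.
  + by rewrite (lap_prefix_const (c := (bsize r)%:R)) // fS fc // add0r subr0.
  + by rewrite block_sum_step_vec fS /f /step_vec ur ltnn eqxx; ring.
  + rewrite big_ord_recr /= sum_block_step_vec block_sum_step_vec.
    by rewrite /f step_vec_out ?ur // mulr0; ring.
- have [u u0] := block_inhabited (leq_ltn_trans (leq0n r) (ltnW rk)).
  by exists u; rewrite fc ?u0 // pnatr_eq0 -lt0n (bsize_gt0 (ltnW rk)).
Qed.

Lemma lap_prefix_block_sum0 r f u : (forall b, block_sum f b = 0) ->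
  lap_prefix r f u =
  (\sum_(b < r) (block_adj (blk u) b)%:R * (bsize b)%:R) * f u.
Proof.
move=> f0; rewrite /lap_prefix mulr_suml; apply: eq_bigr => b _.
by rewrite f0 subr0 mulrA.
Qed.

Lemma twin_in_block b : (1 < bsize b)%N ->
  exists u1 u2 : V, [/\ blk u1 = b, blk u2 = b & u1 != u2].
Proof.
move=> a_gt1; have bk : (b < k)%N.
  by rewrite ltnNge; apply: contraL a_gt1 => /bsize_out ->.
have a_gt1' : (1 < alpha (Ordinal bk))%N by rewrite -bsizeE.
exists (Tagged (fun i => 'I_(alpha i)) (Ordinal (ltnW a_gt1'))).
by exists (Tagged (fun i => 'I_(alpha i)) (Ordinal a_gt1')); rewrite eq_Tagged.
Qed.

Lemma prefix_eigen_twin b r : (1 < bsize b)%N -> (b < r)%N ->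
  exists f, prefix_eigen r f (\sum_(b' < r) (block_adj b b')%:R * (bsize b')%:R).
Proof.
case/twin_in_block => u1 [u2 [u1b u2b u12]] br.
pose f u : algC := (u == u1)%:R - (u == u2)%:R.
have f_out u : blk u != b -> f u = 0.
  move=> ub; have [u_1|u1u] := eqVneq u u1; first by rewrite u_1 u1b eqxx in ub.
  have [u_2|u2u] := eqVneq u u2; first by rewrite u_2 u2b eqxx in ub.
  by rewrite /f (negbTE u1u) (negbTE u2u) subrr.
have sum_eq (P : pred V) x : \sum_(w | P w) ((w == x)%:R : algC) = (P x)%:R.
  rewrite big_mkcond (bigD1 x) //= eqxx big1 => [|w wx].
    by rewrite addr0; case: (P x).
  by rewrite (negbTE wx); case: (P w).
have f0 b' : block_sum f b' = 0 by rewrite /block_sum sumrB !sum_eq u1b u2b subrr.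
exists f; split=> [u ru|u ur|].
- by apply: f_out; rewrite gtn_eqF // (leq_trans br ru).
- rewrite lap_prefix_block_sum0 //; have [<- //|ub] := eqVneq (blk u) b.
  by rewrite f_out // !mulr0.
- by exists u1; rewrite /f eqxx (negbTE u12) subr0 oner_neq0.
Qed.

Lemma prefix_eigen_lift r g nu : ~~ odd r -> nu != 0 -> prefix_eigen r g nu ->
  prefix_eigen r.+2 g (nu + (bsize r.+1)%:R).
Proof.
move=> r_even nu0 ge; have [gS gL g_nz] := ge.
have g_r u : blk u = r -> g u = 0 by move=> ur; rewrite gS ?ur.
have g_r1 u : blk u = r.+1 -> g u = 0 by move=> ur; rewrite gS ?ur.
have gU : \sum_(b < r) block_sum g b = 0.
  by move/eqP: (prefix_eigen_total ge); rewrite mulf_eq0 (negbTE nu0) => /eqP.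
split=> // [u ru|]; first by apply: gS; lia.
apply: lap_prefixSS_eigen => // u ur.
- by rewrite gL // (block_sum0 g_r1) subr0 mulrDl.
- by rewrite g_r // (block_sum0 g_r) (block_sum0 g_r1) !mulr0 !subr0.
- by rewrite g_r1 // big_ord_recr /= gU (block_sum0 g_r) !mulr0 addr0 subr0.
Qed.

Lemma sum_block_adj_top r : ~~ odd r ->
  \sum_(b < r.+2) (block_adj r.+1 b)%:R * (bsize b)%:R
  = (prefix_size r.+1)%:R :> algC.
Proof.
move=> r_even; rewrite big_ord_recr /= block_adjxx /= r_even mul0r addr0.
rewrite /prefix_size natr_sum; apply: eq_bigr => b _.
by rewrite block_adj_gt //= r_even mul1r.
Qed.

Lemma sum_block_adj_mid r : ~~ odd r ->
  \sum_(b < r.+2) (block_adj r b)%:R * (bsize b)%:R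
  = (bsize r + bsize r.+1)%:R :> algC.
Proof.
move=> r_even; rewrite !big_ord_recr /= block_adjxx block_adj_lt //= r_even.
rewrite big1 ?add0r ?natrD ?mul1r // => b _.
by rewrite block_adj_gt //= (negbTE r_even) mul0r.
Qed.

Lemma prefix_spec_eigen t mu :
  (t.*2 <= k)%N -> mu \in prefix_specC t -> exists f, prefix_eigen t.*2 f mu.
Proof.
elim: t mu => [|t IH] mu tk; first by rewrite in_nil.
rewrite mem_prefix_specCS doubleS in tk *.
have r_even : ~~ odd t.*2 by rewrite odd_double.
case/orP=> [/eqP->|]; first by eexists; apply: prefix_eigen_const; rewrite tk.
case/orP=> [/eqP->|]; first by eexists; apply: prefix_eigen_join.
case/orP=> [/andP[a_gt1 /eqP->]|].
  by rewrite -sum_block_adj_top //; apply: prefix_eigen_twin.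
case/orP=> [/and3P[_ a_gt1 /eqP->]|].
  by rewrite -sum_block_adj_mid //; apply: prefix_eigen_twin; rewrite // ltnS.
case/(IH _ (ltnW (ltnW tk))) => g ge; rewrite -(subrK (bsize t.*2.+1)%:R mu).
have [mu_a|nu0] := eqVneq (mu - (bsize t.*2.+1)%:R) 0.
  have t_gt0 : (0 < t)%N.
    by case: t {IH tk r_even mu_a} ge => // -[gS _ [u]]; rewrite gS ?eqxx.
  by rewrite mu_a add0r; eexists; apply: prefix_eigen_split; rewrite ?double_gt0.
by exists g; apply: prefix_eigen_lift.
Qed.

Lemma eigenvalue_laplacian_spec mu : ~~ odd k ->
  eigenvalue (laplacian adj) mu = (mu \in prefix_specC k./2).
Proof.
move=> k_even; have kE := even_halfK k_even.
apply/idP/idP => [/eigenvalue_CadjP[f]|/prefix_spec_eigen].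
  by move=> fe; apply: (prefix_eigen_spec (f := f)); rewrite kE.
by rewrite kE => /(_ (leqnn k)) /eigenvalue_CadjP.
Qed.

Lemma size_prefix_specS t :
  (size (prefix_spec t.+1) <= 3 + (0 < t) + size (prefix_spec t))%N.
Proof.
rewrite /= !size_cat size_map.
by case: ifP => _; case: (0 < t)%N; rewrite /= ?andbF; try case: ifP => _ /=; lia.
Qed.

Lemma size_prefix_spec t : (size (prefix_spec t.+1) <= 4 * t.+1 - 1)%N.
Proof.
elim: t => [|t IH]; first exact: size_prefix_specS 0.
by have := size_prefix_specS t.+1; lia.
Qed.

Fixpoint core_spec (t : nat) : seq nat :=
  if t is t'.+1 then
    [:: 0%N, prefix_size t'.*2.+2 & map (addn (bsize t'.*2.+1)) (core_spec t')]
  else [::].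

Lemma core_spec_sub t : {subset core_spec t <= prefix_spec t}.
Proof.
elim: t => [|t IH] x //=; rewrite !inE => /or3P[->|->|/mapP[y yt ->]].
- by [].
- by rewrite orbT.
- by rewrite !mem_cat map_f ?IH ?orbT.
Qed.

Lemma size_core_spec t : size (core_spec t) = t.*2.
Proof. by elim: t => //= t IH; rewrite size_map IH. Qed.

Lemma core_spec_le t x : x \in core_spec t -> (x <= prefix_size t.*2)%N.
Proof.
elim: t x => [|t IH] x //=; rewrite doubleS !inE.
case/or3P=> [/eqP->|/eqP->|/mapP[y /IH yt ->]] //.
by rewrite !prefix_sizeS; lia.
Qed.

Lemma uniq_core_spec t : (t.*2 <= k)%N -> uniq (core_spec t).
Proof.
elim: t => [|t IH] // tk; rewrite doubleS in tk.
have a1 := bsize_gt0 tk; have a0 := bsize_gt0 (ltnW tk).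
rewrite /= !inE negb_or map_inj_uniq; last exact: addnI.
rewrite IH ?(ltnW (ltnW tk)) // andbT -andbA; apply/and3P; split.
- by rewrite eq_sym -lt0n !prefix_sizeS; lia.
- by apply/mapP => -[y _]; lia.
- by apply/mapP => -[y /core_spec_le]; rewrite !prefix_sizeS; lia.
Qed.

Lemma size_undup_prefix_spec : (2 <= k)%N -> ~~ odd k ->
  (k <= size (undup (prefix_spec k./2)) <= 2 * k - 1)%N.
Proof.
move=> k_ge2 k_even; have kE := even_halfK k_even.
apply/andP; split.
  rewrite -{1}kE -(size_core_spec k./2) uniq_leq_size ?uniq_core_spec ?kE //.
  by move=> x /core_spec_sub; rewrite mem_undup.
apply: leq_trans (size_undup _) _.
case: k./2 kE => [|t] kE; first by rewrite -kE in k_ge2.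
by apply: leq_trans (size_prefix_spec t) _; rewrite -kE; lia.
Qed.
End Spectrum.

Theorem theorem3p1 (k : nat) (alpha : 'I_k -> nat) :
  (2 <= k)%N -> ~~ odd k -> (forall i, (0 < alpha i)%N) ->
  exists m : nat,
    num_distinct_eigenvalues (laplacian (@Cadj k alpha)) m /\
    (k <= m <= 2 * k - 1)%N.
Proof.
move=> k_ge2 k_even alpha_gt0; set s := undup (prefix_spec alpha k./2).
exists (size s); split; last exact: size_undup_prefix_spec.
exists [seq x%:R | x <- s]; split.
- by rewrite map_inj_uniq ?undup_uniq // => x y /eqP; rewrite eqr_nat => /eqP.
- move=> a; rewrite eigenvalue_laplacian_spec //.
  by apply/mapP/mapP => -[x xs ->]; exists x; rewrite ?mem_undup in xs *.
- by rewrite size_map.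
Qed.
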